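(* Let $M$ be a countable transitive $\aleph_0$-categorical structure with no algebraicity admitting weak elimination of imaginaries. For all distinct $a,b\in M$ and every $2$-type $\tau$ of pairs of distinct elements, there is $k\in\mathbb N$ such that for every finite $A\subseteq M$ there is an alternating $\tau$-path of length $k$ from $a$ to $b$ whose interior is disjoint from $A$. In particular, there are infinitely many alternating $\tau$-paths of length $k$ between $a$ and $b$ with pairwise disjoint interiors.
   Context: $G=\operatorname{Aut}(M)$; a $2$-type is a $G$-orbit on $M^2$, $\mathrm{tp}(cd)$ being the orbit of $(c,d)$. An alternating $\tau$-path between $a$ and $b$ is a sequence of pairwise distinct elements $y_0,\dots,y_{2n}$ with $y_0=a$, $y_{2n}=b$ and $\mathrm{tp}(y_{2i}y_{2i+1})=\mathrm{tp}(y_{2i+2}y_{2i+1})=\tau$ for all $i<n$; its interior is $\{y_1,\dots,y_{2n-1}\}$. No algebraicity: for finite $A\subseteq M$ all orbits of the pointwise stabilizer $G_A$ on $M\setminus A$ are infinite. Weak elimination of imaginaries: every proper open subgroup $V<G$ contains some $G_{\bar a}$ ($\bar a$ a finite tuple) with finite index. *)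

From mathcomp Require Import all_boot.
Set Implicit Arguments. Unset Strict Implicit. Unset Printing Implicit Defensive.

Record Struct := {
  carrier :> countType;
  sym : Type;
  arity : sym -> nat;
  rel : forall s : sym, ('I_(arity s) -> carrier) -> Prop }.

(* list membership without an eqType *)
Fixpoint In_seq (T : Type) (x : T) (s : seq T) : Prop :=
  if s is y :: s' then y = x \/ In_seq x s' else False.

Section Defs.
Variable M : Struct.

Definition is_aut (g : M -> M) : Prop :=
  bijective g /\ forall (s : sym M) (t : 'I_(arity s) -> M), rel (g \o t) <-> rel t.

Definition pstab (A : seq M) (g : M -> M) : Prop :=
  is_aut g /\ forall x, x \in A -> g x = x.

(* tp(cd): the G-orbit of (c,d) on M^2 *)
Definition tp (c d : M) : M * M -> Prop :=
  fun p => exists g, is_aut g /\ p = (g c, g d).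

Definition is_2type_distinct (tau : M * M -> Prop) : Prop :=
  exists c d : M, c <> d /\ tau = tp c d.

(* aleph_0-categoricity, via Ryll-Nardzewski: Aut(M) is oligomorphic
   (finitely many orbits on M^n for every n). *)
Definition oligomorphic : Prop :=
  forall n, exists reps : seq ('I_n -> M), forall t : 'I_n -> M,
    exists2 r, In_seq r reps & exists g, is_aut g /\ forall i, t i = g (r i).

Definition transitive_aut : Prop := forall x y : M, exists g, is_aut g /\ g x = y.

(* no algebraicity: every orbit of G_A on M \ A is infinite *)
Definition no_algebraicity : Prop :=
  forall (A : seq M) (x : M), x \notin A ->
    forall s : seq M, exists g, pstab A g /\ g x \notin s.

(* subgroups of G, openness (pointwise convergence topology), properness *)
Definition is_subgroup (V : (M -> M) -> Prop) : Prop :=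
  [/\ forall g, V g -> is_aut g,
      V id,
      forall g h, V g -> V h -> V (g \o h)
    & forall g, V g -> exists h, [/\ V h, cancel g h & cancel h g] ].

Definition is_open (V : (M -> M) -> Prop) : Prop :=
  exists F : seq M, forall g, pstab F g -> V g.

Definition proper_in_G (V : (M -> M) -> Prop) : Prop :=
  exists g, is_aut g /\ ~ V g.

Definition finite_index (H V : (M -> M) -> Prop) : Prop :=
  exists s : seq (M -> M), (forall g, In_seq g s -> V g) /\
    forall v, V v -> exists2 g, In_seq g s & exists h, H h /\ v =1 g \o h.

Definition weak_EI : Prop :=
  forall V, is_subgroup V -> is_open V -> proper_in_G V ->
    exists a : seq M, (forall g, pstab a g -> V g) /\ finite_index (pstab a) V.

(* alternating tau-path y_0,...,y_{2n} from a to b; its length is n *)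
Definition alt_path (tau : M * M -> Prop) (a b : M) (n : nat) (y : seq M) : Prop :=
  [/\ size y = (2 * n).+1, nth a y 0 = a, nth a y (2 * n) = b, uniq y
    & forall i, i < n ->
        tp (nth a y (2 * i)) (nth a y (2 * i).+1) = tau /\
        tp (nth a y (2 * i).+2) (nth a y (2 * i).+1) = tau].

Definition interior (n : nat) (y : seq M) : seq M := drop 1 (take (2 * n) y).

End Defs.

From mathcomp Require Import all_boot zify.
From Stdlib Require Import FunctionalExtensionality PropExtensionality Classical ClassicalEpsilon.
Set Implicit Arguments. Unset Strict Implicit. Unset Printing Implicit Defensive.

(* Call a and b k-joinable if for every finite A there is an alternating tau-path of
   length k from a to b with interior disjoint from A.  Paths can be reversed, moved by
   automorphisms and concatenated, the junction point being first pushed off the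
   forbidden set by an automorphism fixing the ends (no algebraicity); so "equal or
   k-joinable for some k" is an Aut(M)-invariant equivalence relation.  It is
   non-trivial, since two distinct points with a common tau-neighbour are 1-joinable.
   Transitivity, no algebraicity and weak elimination of imaginaries force such a
   relation to be universal, and disjoint paths are then chosen greedily. *)


Section Automorphisms.
Variable M : Struct.

Lemma aut_id : is_aut (@id M).
Proof. by split; [exists id | move=> s t]. Qed.

Lemma aut_comp (g h : M -> M) : is_aut g -> is_aut h -> is_aut (g \o h).
Proof.
move=> [g_bij g_rel] [h_bij h_rel]; split; first exact: bij_comp.
by move=> s t; apply: iff_trans (g_rel s (h \o t)) (h_rel s t).
Qed.

Lemma aut_inv (g : M -> M) : is_aut g ->
  exists h, [/\ is_aut h, cancel g h & cancel h g].
Proof.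
case=> [[h gK hK] g_rel]; exists h; split => //; split; first by exists g.
move=> s t; have ghtE : g \o (h \o t) = t.
  by apply: functional_extensionality => i /=; rewrite hK.
by split => [/(g_rel s (h \o t)) | rt]; [rewrite ghtE | apply/(g_rel s); rewrite ghtE].
Qed.

Lemma aut_inj (g : M -> M) : is_aut g -> injective g.
Proof. by case=> /bij_inj. Qed.

Lemma tp_aut (g : M -> M) x y : is_aut g -> tp (g x) (g y) = tp x y.
Proof.
move=> g_aut; apply: functional_extensionality => p; apply: propositional_extensionality.
split=> [[f [f_aut ->]] | [f [f_aut ->]]].
  by exists (f \o g); split => //; apply: aut_comp.
have [h [h_aut gK _]] := aut_inv g_aut.
by exists (f \o h); split; [apply: aut_comp | rewrite /= !gK].
Qed.

End Automorphisms.

Section AlternatingPaths.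
Variables (M : Struct) (tau : M * M -> Prop).

(* [alt_path] reads entries with default [a]; as all indices used are in range, the
   default is irrelevant, which the path operations below need. *)
Definition alt_path_dflt (d a b : M) n (y : seq M) : Prop :=
  [/\ size y = (2 * n).+1, nth d y 0 = a, nth d y (2 * n) = b, uniq y
    & forall i, i < n ->
        tp (nth d y (2 * i)) (nth d y (2 * i).+1) = tau /\
        tp (nth d y (2 * i).+2) (nth d y (2 * i).+1) = tau].

Lemma alt_path_dfltE d a b n y : alt_path tau a b n y <-> alt_path_dflt d a b n y.
Proof.
suff dflt_any d1 d2 : alt_path_dflt d1 a b n y -> alt_path_dflt d2 a b n y.
  by split; apply: dflt_any.
case=> Sy y0 yn uy edges; have nthE j : j <= 2 * n -> nth d1 y j = nth d2 y j.
  by move=> le_jn; apply: set_nth_default; rewrite Sy.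
split => //; rewrite -?nthE //.
by move=> i lt_in; rewrite -!nthE; [exact: edges | lia ..].
Qed.

Lemma mem_interior a b n p z : alt_path tau a b n p ->
  (z \in interior n p) = [&& z \in p, z != a & z != b].
Proof.
case=> Sp p0 pn up _.
case: n Sp pn => [|m] Sp pn.
  case: p Sp p0 pn up => [|x []] //= _ -> <- _.
  by rewrite /interior /= in_cons in_nil orbF; case: eqP.
case: p Sp p0 pn up => [|x t] //= [St] <-; case/lastP: t St => [|u y] //.
rewrite size_rcons => -[Su]; rewrite -Su nth_rcons ltnn eqxx => <- /andP [].
rewrite /interior (_ : 2 * m.+1 = (size u).+1); last by lia.
rewrite /= drop0 -cats1 take_size_cat // cats1.
rewrite rcons_uniq mem_rcons in_cons negb_or in_cons => /andP [xy xu] /andP [yu _].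
rewrite mem_rcons in_cons.
case: (eqVneq z x) => [-> | _]; first by rewrite (negbTE xu).
by case: (eqVneq z y) => [-> | _]; rewrite ?(negbTE yu) ?andbT ?andbF.
Qed.

Lemma alt_path_rev a b n p : alt_path tau a b n p -> alt_path tau b a n (rev p).
Proof.
move/(alt_path_dfltE a) => [Sp p0 pn up edges]; apply/(alt_path_dfltE a).
have nthE j : j <= 2 * n -> nth a (rev p) j = nth a p (2 * n - j).
  by move=> le_jn; rewrite nth_rev Sp; [congr nth; lia | lia].
split; rewrite ?size_rev ?rev_uniq ?nthE ?subn0 ?subnn //.
move=> i lt_in; rewrite !nthE; try lia.
have [e1 e2] := edges (n - i.+1) ltac:(lia).
have -> : 2 * n - 2 * i = (2 * (n - i.+1)).+2 by lia.
have -> : 2 * n - (2 * i).+1 = (2 * (n - i.+1)).+1 by lia.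
by have -> : 2 * n - (2 * i).+2 = 2 * (n - i.+1) by lia.
Qed.

Lemma alt_path_map (g : M -> M) a b n p : is_aut g ->
  alt_path tau a b n p -> alt_path tau (g a) (g b) n (map g p).
Proof.
move=> g_aut [Sp p0 pn up edges].
have nthE j : j <= 2 * n -> nth (g a) (map g p) j = g (nth a p j).
  by move=> le_jn; apply: nth_map; rewrite Sp; lia.
split; rewrite ?size_map ?nthE ?p0 ?pn ?(map_inj_uniq (aut_inj g_aut)) //.
by move=> i lt_in; rewrite !nthE ?tp_aut //; try lia; apply: edges.
Qed.

Lemma alt_path_cat a c b k l p q :
  alt_path tau a c k p -> alt_path tau c b l q ->
  (forall z, z \in p -> z \notin behead q) ->
  alt_path tau a b (k + l) (p ++ behead q).
Proof.
move=> /(alt_path_dfltE a) [Sp p0 pk up p_edges].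
move=> /(alt_path_dfltE a) [Sq q0 ql uq q_edges] disj_pq.
apply/(alt_path_dfltE a).
have nth_l j : j <= 2 * k -> nth a (p ++ behead q) j = nth a p j.
  by move=> le_jk; rewrite nth_cat Sp ifT //; lia.
have nth_r j : 2 * k <= j -> nth a (p ++ behead q) j = nth a q (j - 2 * k).
  rewrite leq_eqVlt => /orP [/eqP <- | lt_kj]; first by rewrite nth_l // pk subnn q0.
  by rewrite nth_cat Sp ltnNge lt_kj /= nth_behead; congr nth; lia.
split.
- by rewrite size_cat size_behead Sp Sq /=; lia.
- by rewrite nth_l.
- by rewrite nth_r ?mulnDr ?addKn //; lia.
- rewrite cat_uniq up; apply/and3P; split => //; last by case: (q) uq => //= x s /andP [].
  by apply/hasPn => z zq; apply: contraL zq; apply: disj_pq.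
- move=> i lt_i; case: (ltnP i k) => [lt_ik | le_ki].
    by rewrite !nth_l; try lia; apply: p_edges.
  rewrite !nth_r; try lia.
  have -> : 2 * i - 2 * k = 2 * (i - k) by lia.
  have -> : (2 * i).+1 - 2 * k = (2 * (i - k)).+1 by lia.
  have -> : (2 * i).+2 - 2 * k = (2 * (i - k)).+2 by lia.
  by apply: q_edges; lia.
Qed.

Lemma alt_path_head a b n p : alt_path tau a b n p -> exists2 t, p = a :: t & a \notin t.
Proof. by case: p => [[]|x t [_ /= <- _ /andP [xt _] _]] //; exists t. Qed.

Lemma interior_map (g : M -> M) n p : interior n (map g p) = map g (interior n p).
Proof. by rewrite /interior map_drop map_take. Qed.

Lemma interior_cat a c b k l p q z :
  alt_path tau a c k p -> alt_path tau c b l q ->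
  alt_path tau a b (k + l) (p ++ behead q) -> z \in interior (k + l) (p ++ behead q) ->
  [|| z \in interior k p, z == c | z \in interior l q].
Proof.
move=> hp hq hpq; rewrite (mem_interior _ hpq) mem_cat (mem_interior _ hp) (mem_interior _ hq).
by case/and3P=> /orP [-> | /mem_behead ->] -> ->; case: (z == c); rewrite ?orbT.
Qed.

Definition joinable k (x y : M) : Prop :=
  forall A : seq M, exists p, alt_path tau x y k p /\ forall z, z \in interior k p -> z \notin A.

Lemma joinable_sym k x y : joinable k x y -> joinable k y x.
Proof.
move=> jxy A; have [p [hp p_avoid]] := jxy A.
exists (rev p); split => [|z]; first exact: alt_path_rev.
rewrite (mem_interior _ (alt_path_rev hp)) mem_rev => /and3P [zp zy zx].
by apply: p_avoid; rewrite (mem_interior _ hp) zp zx zy.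
Qed.

Lemma joinable_aut (g : M -> M) k x y : is_aut g -> joinable k x y -> joinable k (g x) (g y).
Proof.
move=> g_aut jxy A; have [h [_ gK _]] := aut_inv g_aut.
have [p [hp p_avoid]] := jxy (map h A).
exists (map g p); split => [|z]; first exact: alt_path_map.
rewrite interior_map => /mapP [w /p_avoid w_avoid ->].
by apply: contra w_avoid => gwA; apply/mapP; exists (g w); rewrite ?gK.
Qed.

Hypothesis no_alg : no_algebraicity M.

Lemma joinable_trans k l x c y : x != y -> x != c -> c != y ->
  joinable k x c -> joinable l c y -> joinable (k + l) x y.
Proof.
move=> xy xc cy jxc jcy A.
(* First move c to some c' outside A; then the leg from c' to y avoids x :: A and the
   leg from x to c' avoids A and the whole second leg. *)
have [g [[g_aut g_fix] gcA]] : exists g, pstab [:: x; y] g /\ g c \notin A.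
  by apply: no_alg; rewrite !inE negb_or eq_sym xc cy.
have gx : g x = x by apply: g_fix; rewrite inE eqxx.
have gy : g y = y by apply: g_fix; rewrite !inE eqxx orbT.
set c' := g c in gcA.
have xc' : x != c' by rewrite -gx (inj_eq (aut_inj g_aut)).
have jxc' : joinable k x c' by rewrite -gx; apply: joinable_aut.
have jc'y : joinable l c' y by rewrite -gy; apply: joinable_aut.
have [q [hq q_avoid]] := jc'y (x :: A).
have [p [hp p_avoid]] := jxc' (A ++ q).
have [t q_eq c't] := alt_path_head hq.
have disj : forall z, z \in p -> z \notin behead q.
  move=> z zp; apply/negP; rewrite q_eq /= => zt.
  have zq : z \in q by rewrite q_eq inE zt orbT.
  have zc' : z != c' by apply: contraNneq c't => <-.
  case: (eqVneq z x) => [zx | zx].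
    have : z \in interior l q by rewrite (mem_interior _ hq) zq zc' zx.
    by move/q_avoid; rewrite zx inE eqxx.
  have : z \in interior k p by rewrite (mem_interior _ hp) zp zx zc'.
  by move/p_avoid; rewrite mem_cat zq orbT.
have hpq := alt_path_cat hp hq disj.
exists (p ++ behead q); split => // z /(interior_cat hp hq hpq).
case/or3P=> [/p_avoid | /eqP -> // | /q_avoid]; first by rewrite mem_cat negb_or => /andP [].
by rewrite inE negb_or => /andP [].
Qed.

Hypothesis tau_distinct : is_2type_distinct tau.

Lemma tp_tau_neq x y : tp x y = tau -> x != y.
Proof.
case: tau_distinct => c [d [cd ->]] txy; apply/eqP => exy; apply: cd.
have : tp x y (x, y) by exists id; split => //; apply: aut_id.
by rewrite txy => -[g [g_aut [gc gd]]]; apply: (aut_inj g_aut); rewrite -gc -gd exy.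
Qed.

Lemma joinable_common_neighbour x y c : x != y -> tp x c = tau -> tp y c = tau ->
  joinable 1 x y.
Proof.
move=> xy txc tyc A.
have [xc yc] := (tp_tau_neq txc, tp_tau_neq tyc).
have [g [[g_aut g_fix] gcA]] : exists g, pstab [:: x; y] g /\ g c \notin A.
  by apply: no_alg; rewrite !inE negb_or !(eq_sym c) xc yc.
have gx : g x = x by apply: g_fix; rewrite inE eqxx.
have gy : g y = y by apply: g_fix; rewrite !inE eqxx orbT.
exists [:: x; g c; y]; split => [|z]; last by rewrite /interior /= inE => /eqP ->.
have gcx : g c != x by rewrite -[x in _ != x]gx (inj_eq (aut_inj g_aut)) eq_sym.
have gcy : g c != y by rewrite -[y in _ != y]gy (inj_eq (aut_inj g_aut)) eq_sym.
split => //=; first by rewrite !inE negb_or xy eq_sym gcx gcy.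
by case=> // _; rewrite -gx -gy !tp_aut.
Qed.

Lemma exists_joinable1 : exists x y, x != y /\ joinable 1 x y.
Proof.
have [c [d [cd tcd]]] := tau_distinct.
have [g [[g_aut g_fix] gc]] : exists g, pstab [:: d] g /\ g c \notin [:: c].
  by apply: no_alg; rewrite inE; apply/eqP.
have gd : g d = d by apply: g_fix; rewrite inE.
have cgc : c != g c by move: gc; rewrite inE eq_sym.
exists c, (g c); split => //; apply: (joinable_common_neighbour cgc (c := d)) => //.
by rewrite -[d in tp _ d]gd tp_aut.
Qed.

Definition linked (x y : M) : Prop := x = y \/ exists k, joinable k x y.

Lemma linked_refl x : linked x x.
Proof. by left. Qed.

Lemma linked_sym x y : linked x y -> linked y x.
Proof. by case=> [-> | [k jxy]]; [left | right; exists k; apply: joinable_sym]. Qed.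

Lemma linked_aut (g : M -> M) x y : is_aut g -> linked x y -> linked (g x) (g y).
Proof. by move=> g_aut [-> | [k jxy]]; [left | right; exists k; apply: joinable_aut]. Qed.

Lemma linked_trans x y z : linked x y -> linked y z -> linked x z.
Proof.
move=> [-> // | [k jxy]] [<- | [l jyz]]; first by right; exists k.
case: (eqVneq x z) => [-> | xz]; first exact: linked_refl.
case: (eqVneq x y) => [exy | xy]; first by right; exists l; rewrite exy.
case: (eqVneq y z) => [eyz | yz]; first by right; exists k; rewrite -eyz.
by right; exists (k + l); apply: joinable_trans jxy jyz.
Qed.

End AlternatingPaths.

Lemma In_seq_map (T : Type) (U : eqType) (f : T -> U) x s : In_seq x s -> f x \in map f s.
Proof. by elim: s => //= y s IH [-> | /IH]; rewrite inE ?eqxx // => ->; rewrite orbT. Qed.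

Section Primitivity.
Variable M : Struct.
Hypotheses (transM : transitive_aut M) (no_alg : no_algebraicity M) (weiM : weak_EI M).
Variable E : M -> M -> Prop.
Hypotheses (E_refl : forall x, E x x) (E_sym : forall x y, E x y -> E y x)
  (E_trans : forall x y z, E x y -> E y z -> E x z)
  (E_aut : forall g x y, is_aut g -> E x y -> E (g x) (g y)).

Definition class_stab (a : M) (g : M -> M) : Prop := is_aut g /\ E a (g a).

Lemma class_stab_subgroup a : is_subgroup (class_stab a).
Proof.
split.
- by move=> g [].
- by split; [apply: aut_id | apply: E_refl].
- move=> g h [g_aut Eag] [h_aut Eah]; split; first exact: aut_comp.
  by apply: E_trans Eag _; apply: E_aut.
- move=> g [g_aut Eag]; have [h [h_aut gK hK]] := aut_inv g_aut.
  exists h; split => //; split => //.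
  by apply: E_sym; rewrite -{2}(gK a); apply: E_aut.
Qed.

Lemma class_stab_open a : is_open (class_stab a).
Proof. by exists [:: a] => g [g_aut g_fix]; split; rewrite ?g_fix ?inE. Qed.

Hypothesis E_nontrivial : exists x y, x != y /\ E x y.

Lemma exists_class_outside a (s : seq M) : exists2 x, E a x & x \notin s.
Proof.
have [x [y [xy Exy]]] := E_nontrivial.
have [h [h_aut <-]] := transM x a.
have [g [[g_aut g_fix] ghy]] : exists g, pstab [:: h x] g /\ g (h y) \notin s.
  by apply: no_alg; rewrite inE (inj_eq (aut_inj h_aut)) eq_sym.
have ghx : g (h x) = h x by apply: g_fix; rewrite inE.
exists (g (h y)) => //; rewrite -{1}ghx.
exact: E_aut g_aut (E_aut h_aut Exy).
Qed.

(* If E a b failed, weak EI would give a tuple d :: abar whose pointwise stabiliser has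
   finite index in the stabiliser of the class of a.  That stabiliser contains G_x for
   some x in the class of a outside d :: abar, and the G_x-orbit of d, infinite by no
   algebraicity, would be covered by the finitely many values f d of coset
   representatives f. *)
Lemma invariant_equiv_universal a b : E a b.
Proof.
apply: NNPP => nEab.
have proper : proper_in_G (class_stab a).
  by have [g [g_aut gab]] := transM a b; exists g; split => // -[_]; rewrite gab.
have [[|d abar] [stab_sub [s [_ cosets]]]] :=
  weiM (class_stab_subgroup a) (class_stab_open a) proper.
  by case: proper => g [g_aut []]; apply: stab_sub.
have [x Eax xd] := exists_class_outside a (d :: abar).
have [g [[g_aut g_fix] gd]] : exists g, pstab [:: x] g /\ g d \notin map (fun f => f d) s.
  by apply: no_alg; rewrite inE; apply: contraNneq xd => ->; rewrite inE eqxx.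
have stab_g : class_stab a g.
  have gx : g x = x by apply: g_fix; rewrite inE.
  by split => //; apply: (E_trans Eax); rewrite -{1}gx; apply: E_aut g_aut (E_sym Eax).
have [f fs [h [[_ h_fix] g_eq]]] := cosets g stab_g.
by move: gd; rewrite g_eq /= h_fix ?inE ?eqxx // (In_seq_map (fun f => f d) fs).
Qed.

End Primitivity.

Lemma disjoint_avoiding_family (T : eqType) (X : Type) (Q : X -> Prop) (supp : X -> seq T) :
  (forall A : seq T, exists x, Q x /\ forall z, z \in supp x -> z \notin A) ->
  exists P : nat -> X, (forall i, Q (P i)) /\
    forall i j, i <> j -> forall z, z \in supp (P i) -> z \notin supp (P j).
Proof.
move=> avoid.
pose pick A := proj1_sig (constructive_indefinite_description _ (avoid A)).
have pickP A : Q (pick A) /\ forall z, z \in supp (pick A) -> z \notin A.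
  exact: proj2_sig (constructive_indefinite_description _ (avoid A)).
pose used := fix used n := if n is m.+1 then used m ++ supp (pick (used m)) else [::].
have used_grows i j z : i < j -> z \in supp (pick (used i)) -> z \in used j.
  elim: j => // j IH; rewrite ltnS leq_eqVlt => /orP [/eqP -> | lt_ij] zi /=.
    by rewrite mem_cat zi orbT.
  by rewrite mem_cat IH.
exists (fun n => pick (used n)); split => [i | ]; first exact: (pickP _).1.
suff lt_disj i j z : i < j -> z \in supp (pick (used i)) -> z \notin supp (pick (used j)).
  move=> i j /eqP; rewrite neq_ltn => /orP [] lt z zi; first exact: lt_disj zi.
  by apply: contraL zi; apply: lt_disj.
by move=> lt_ij /(used_grows _ _ _ lt_ij); apply: contraL; apply: (pickP _).2.
Qed.

Theorem mainTheorem12 (M : Struct) :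
  oligomorphic M -> transitive_aut M -> no_algebraicity M -> weak_EI M ->
  forall a b : M, a <> b ->
  forall tau : M * M -> Prop, is_2type_distinct tau ->
  exists k : nat,
    (forall A : seq M, exists y : seq M,
       alt_path tau a b k y /\ forall x, x \in interior k y -> x \notin A) /\
    (exists P : nat -> seq M,
       (forall i, alt_path tau a b k (P i)) /\
       forall i j, i <> j -> forall x, x \in interior k (P i) -> x \notin interior k (P j)).
Proof.
move=> _ transM no_alg weiM a b ab tau tau_distinct.
have linked_nontrivial : exists x y, x != y /\ linked tau x y.
  have [x [y [xy jxy]]] := exists_joinable1 no_alg tau_distinct.
  by exists x, y; split => //; right; exists 1.
have [// | [k jab]] := invariant_equiv_universal transM no_alg weiM (@linked_refl _ tau)
  (@linked_sym _ tau) (linked_trans no_alg) (@linked_aut _ tau) linked_nontrivial a b.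
exists k; split => //; exact: disjoint_avoiding_family.
Qed.
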